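(* Let $G$ be a bipartite graph of order $n$. Then $$Mo(G) \leq \alpha_1(1-\alpha_1)(1-2\alpha_1)n^3=\frac{\sqrt{3}}{18}n^3,$$ where $\alpha_1=\frac{1}{2}\left(1-\frac{1}{\sqrt{3}}\right)$.
   Context: All graphs are finite and simple. For a graph $G$ and an edge $uv$ of $G$, $n_G(u,v)$ denotes the number of vertices of $G$ whose distance in $G$ to $u$ is strictly smaller than their distance in $G$ to $v$. The Mostar index of $G$ is $Mo(G)=\sum_{uv\in E(G)}|n_G(u,v)-n_G(v,u)|$. *)

From mathcomp Require Import all_boot all_order all_algebra.
Set Implicit Arguments. Unset Strict Implicit. Unset Printing Implicit Defensive.
Import Order.TTheory GRing.Theory Num.Theory.

Definition simple_graph (T : finType) (e : rel T) : Prop :=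
  symmetric e /\ irreflexive e.

Definition bipartite (T : finType) (e : rel T) : Prop :=
  exists c : T -> bool, forall x y, e x y -> c x != c y.

Fixpoint walk (T : finType) (e : rel T) (k : nat) (x y : T) : bool :=
  if k is k'.+1 then [exists z, e x z && walk e k' z y] else x == y.

(* If y is not
   reachable from x, the value is #|T| (any shortest walk has length < #|T|).
   For an edge uv, vertices outside the component of u and v get the same
   value #|T| to both ends, so they are counted in neither n(u,v) nor n(v,u),
   in accordance with infinite distance. *)
Definition gdist (T : finType) (e : rel T) (x y : T) : nat :=
  find (fun k => walk e k x y) (iota 0 #|T|).

Definition ncloser (T : finType) (e : rel T) (u v : T) : nat :=
  #|[set w : T | gdist e w u < gdist e w v]|.

Definition mostar (T : finType) (e : rel T) : nat :=
  \sum_(u : T) \sum_(v : T | e u v && (enum_rank u < enum_rank v)%N)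
     ((ncloser e u v - ncloser e v u) + (ncloser e v u - ncloser e u v)).

(* For an edge uv of a bipartite graph, u and every neighbour of u other than v
   are strictly closer to u than to v (no neighbour of u is adjacent to v), so
   n(u,v) >= deg u; symmetrically n(v,u) >= deg v, and n(u,v) + n(v,u) <= n.
   Under these constraints the cubic bound y(n - y)(n - 2y) <= sqrt3/18 n^3,
   attained at y = alpha1 n, gives
     |n(u,v) - n(v,u)| <= sqrt3/18 n^2 (1/deg u + 1/deg v).
   Summing over the edges, every vertex w contributes deg w * 1/deg w <= 1. *)
From mathcomp Require Import all_boot all_order all_algebra.
From mathcomp Require Import ring lra.
Set Implicit Arguments. Unset Strict Implicit. Unset Printing Implicit Defensive.
Import Order.TTheory GRing.Theory Num.Theory.

Section SqrtThreeBounds.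
Local Open Scope ring_scope.
Variable R : rcfType.
Local Notation s := (Num.sqrt 3 : R).

Lemma sqrt3_sqr : s ^+ 2 = 3.
Proof. by rewrite sqr_sqrtr // ler0n. Qed.

Lemma sqrt3_ge : 3 / 2 <= s.
Proof. have := sqrt3_sqr; have := sqrtr_ge0 (3 : R); nra. Qed.

Lemma cubic_le_sqrt3 (N y : R) : 0 <= y -> y <= N ->
  y * (N - y) * (N - 2 * y) <= s / 18 * N ^+ 3.
Proof.
move=> y_ge0 y_leN.
(* The defect is a square times a factor that is nonnegative on [0, N]; its
   double root y = (3 - sqrt3)/6 N is the maximiser alpha1 N. *)
have -> : y * (N - y) * (N - 2 * y) =
    s / 18 * N ^+ 3 - 2 * (y - (3 - s) / 6 * N) ^+ 2 * ((3 + 2 * s) / 6 * N - y)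
    + (s ^+ 2 - 3) * (N ^+ 2 * y / 6 + (2 * s - 9) * N ^+ 3 / 108).
  by field.
rewrite sqrt3_sqr subrr mul0r addr0 lerBlDr lerDl.
apply: mulr_ge0; first by rewrite mulr_ge0 // sqr_ge0.
have := sqrt3_ge; nra.
Qed.

Lemma alpha1_cubicE (n : R) : let a1 : R := 2^-1 * (1 - s^-1) in
  a1 * (1 - a1) * (1 - 2 * a1) * n ^+ 3 = s / 18 * n ^+ 3.
Proof.
move=> a1; have s_neq0 : s != 0 by rewrite gt_eqF //; have := sqrt3_ge; lra.
apply/eqP; rewrite -subr_eq0 [X in X == 0](_ : _ =
    (s ^+ 2 - 3) * (- (2 * s ^+ 2 - 3) * n ^+ 3 / (36 * s ^+ 3))).
  by rewrite sqrt3_sqr subrr mul0r.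
by rewrite /a1; field.
Qed.

Lemma subr_le_sqrt3_invD (N y : R) : 0 < y -> y < N ->
  N - 2 * y <= s / 18 * N ^+ 2 * ((N - y)^-1 + y^-1).
Proof.
move=> y_gt0 y_ltN; have Ny_gt0 : 0 < N - y by lra.
have -> : s / 18 * N ^+ 2 * ((N - y)^-1 + y^-1) = s / 18 * N ^+ 3 / (y * (N - y)).
  by field; rewrite ?gt_eqF.
rewrite ler_pdivlMr ?mulr_gt0 // [_ * (y * _)]mulrC.
by apply: cubic_le_sqrt3; lra.
Qed.

Lemma distr_le_sqrt3_invD (a b x y N : R) :
  1 <= x -> x <= a -> 1 <= y -> y <= b -> a + b <= N ->
  `|a - b| <= s / 18 * N ^+ 2 * (x^-1 + y^-1).
Proof.
wlog b_le_a : a b x y / b <= a.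
  move=> wlog_ab x_ge1 x_lea y_ge1 y_leb ab_leN.
  have [|a_le_b] := leP b a; first by move/wlog_ab; apply.
  by rewrite distrC [x^-1 + _]addrC wlog_ab //; lra.
move=> x_ge1 x_lea y_ge1 y_leb ab_leN.
rewrite ger0_norm ?subr_ge0 //.
have K_ge0 : 0 <= s / 18 * N ^+ 2.
  by rewrite mulr_ge0 ?sqr_ge0 // divr_ge0 ?sqrtr_ge0.
have inv_le : (N - y)^-1 <= x^-1 by rewrite lef_pV2 ?posrE; lra.
have y_gt0 : 0 < y by lra.
have y_ltN : y < N by lra.
have ab_le : a - b <= N - 2 * y by lra.
apply: le_trans ab_le (le_trans (subr_le_sqrt3_invD y_gt0 y_ltN) _).
by rewrite ler_wpM2l // lerD2r.
Qed.

End SqrtThreeBounds.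

Definition degree (T : finType) (e : rel T) (u : T) : nat := #|[set w | e u w]|.

Section SimpleGraph.
Variables (T : finType) (e : rel T).
Hypotheses (e_sym : symmetric e) (e_irr : irreflexive e).

Lemma walk1 x y : walk e 1 x y = e x y.
Proof.
apply/existsP/idP => [[z /andP[exz /eqP <-]] //|exy].
by exists y; rewrite exy eqxx.
Qed.

Lemma card_gt1_neq (x y : T) : x != y -> 1 < #|T|.
Proof. by move=> xy; apply: leq_trans (max_card [set x; y]); rewrite cards2 xy. Qed.

Lemma gdistxx x : gdist e x x = 0.
Proof.
rewrite /gdist; have : 0 < #|T| by apply/card_gt0P; exists x.
by case: #|T| => //= N _; rewrite eqxx.
Qed.

Lemma gdist_gt0 x y : x != y -> 0 < gdist e x y.
Proof.
rewrite /gdist => /negbTE xy; have : 0 < #|T| by apply/card_gt0P; exists x.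
by case: #|T| => //= N _; rewrite xy.
Qed.

Lemma edge_neq x y : e x y -> x != y.
Proof. by apply: contraTneq => ->; rewrite e_irr. Qed.

Lemma gdist_edge x y : e x y -> gdist e x y = 1.
Proof.
move=> exy; have xy := edge_neq exy; rewrite /gdist.
case: #|T| (card_gt1_neq xy) => [|[|N]] //= _.
by move: (walk1 x y) => /= ->; rewrite (negbTE xy) exy.
Qed.

Lemma gdist_gt1 x y : x != y -> ~~ e x y -> 1 < gdist e x y.
Proof.
move=> xy nexy; rewrite /gdist.
case: #|T| (card_gt1_neq xy) => [|[|N]] //= _.
by move: (walk1 x y) => /= ->; rewrite (negbTE xy) (negbTE nexy).
Qed.

Lemma ncloserD_le_card u v : ncloser e u v + ncloser e v u <= #|T|.
Proof.
rewrite /ncloser -cardsUI.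
have -> : [set w | gdist e w u < gdist e w v] :&: [set w | gdist e w v < gdist e w u]
    = set0.
  by apply/setP => w; rewrite !inE ltnNge andbC; case: ltnP => // /ltnW ->.
by rewrite cards0 addn0 max_card.
Qed.

Lemma degree_gt0 u v : e u v -> 0 < degree e u.
Proof. by move=> euv; rewrite card_gt0; apply/set0Pn; exists v; rewrite inE. Qed.

Lemma degree_le_ncloser (c : T -> bool) : (forall x y, e x y -> c x != c y) ->
  forall u v, e u v -> degree e u <= ncloser e u v.
Proof.
move=> c_proper u v euv.
have -> : degree e u = #|u |: ([set w | e u w] :\ v)|.
  rewrite cardsU1 !inE e_irr andbF /degree (cardsD1 v [set w | e u w]) !inE euv.
  by rewrite add1n.
apply: subset_leq_card; apply/subsetP => w; rewrite !inE.
case/predU1P => [->|/andP[wv euw]]; first by rewrite gdistxx gdist_gt0 ?edge_neq.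
rewrite gdist_edge ?(e_sym w u) // gdist_gt1 //; apply/negP => ewv.
move: (c_proper _ _ euw) (c_proper _ _ euv) (c_proper _ _ ewv).
by case: (c u); case: (c v); case: (c w).
Qed.

End SimpleGraph.

Section Handshake.
Local Open Scope ring_scope.
Variables (T : finType) (e : rel T).
Hypotheses (e_sym : symmetric e) (e_irr : irreflexive e).

Lemma sum_edges_degree (V : nmodType) (F : T -> V) :
  \sum_u \sum_(v | e u v && (enum_rank u < enum_rank v)%N) (F u + F v)
  = \sum_u F u *+ degree e u.
Proof.
set P := fun u v => e u v && (enum_rank u < enum_rank v)%N.
have swap : \sum_u \sum_(v | P u v) F v = \sum_u \sum_(v | P v u) F u.
  rewrite (eq_bigr (fun u => \sum_v (if P u v then F v else 0))); last first.
    by move=> u _; rewrite big_mkcond.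
  by rewrite exchange_big /=; apply: eq_bigr => v _; rewrite [RHS]big_mkcond.
under eq_bigr => u _ do rewrite big_split /=.
rewrite big_split /= swap -big_split /=; apply: eq_bigr => u _.
rewrite big_mkcond [X in _ + X]big_mkcond -big_split /=.
rewrite (eq_bigr (fun v => if v \in [set w | e u w] then F u else 0)); last first.
  move=> v _; rewrite inE /P (e_sym v u).
  case euv: (e u v) => /=; last by rewrite addr0.
  have ruv : enum_rank u != enum_rank v.
    by rewrite (inj_eq enum_rank_inj) (edge_neq e_irr euv).
  case: ltngtP => [_|_|/val_inj ruvE]; rewrite ?addr0 ?add0r //.
  by rewrite ruvE eqxx in ruv.
by rewrite -big_mkcond sumr_const.
Qed.

End Handshake.

Local Open Scope ring_scope.

Lemma natr_subnDsubn (R : numDomainType) (a b : nat) :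
  ((a - b) + (b - a))%N%:R = `|a%:R - b%:R| :> R.
Proof.
have [a_le_b|/ltnW b_le_a] := leqP a b.
  rewrite (eqP (_ : a - b == 0)%N) ?subn_eq0 // add0n natrB //.
  by rewrite distrC ger0_norm // subr_ge0 ler_nat.
rewrite (eqP (_ : b - a == 0)%N) ?subn_eq0 // addn0 natrB //.
by rewrite ger0_norm // subr_ge0 ler_nat.
Qed.

Lemma mostar_le_sqrt3 (R : rcfType) (T : finType) (e : rel T) (c : T -> bool) :
  symmetric e -> irreflexive e -> (forall x y, e x y -> c x != c y) ->
  (mostar e)%:R <= Num.sqrt 3 / 18 * (#|T|%:R : R) ^+ 3.
Proof.
move=> e_sym e_irr c_proper.
set n : R := #|T|%:R; set K := Num.sqrt 3 / 18 * n ^+ 2.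
have K_ge0 : 0 <= K by rewrite mulr_ge0 ?sqr_ge0 // divr_ge0 ?sqrtr_ge0.
have deg_le := degree_le_ncloser e_sym e_irr c_proper.
apply: le_trans (_ : \sum_u \sum_(v | e u v && (enum_rank u < enum_rank v)%N)
    K * ((degree e u)%:R^-1 + (degree e v)%:R^-1) <= _).
  rewrite /mostar natr_sum; apply: ler_sum => u _; rewrite natr_sum.
  apply: ler_sum => v /andP[euv _]; rewrite natr_subnDsubn.
  have evu : e v u by rewrite e_sym.
  apply: distr_le_sqrt3_invD; rewrite ?ler1n ?ler_nat ?deg_le ?(degree_gt0 euv)
    ?(degree_gt0 evu) //.
  by rewrite -natrD ler_nat ncloserD_le_card.
under eq_bigr => u _ do rewrite -mulr_sumr.
rewrite -mulr_sumr sum_edges_degree // exprSr mulrA ler_wpM2l //.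
have -> : n = \sum_(u : T) 1 by rewrite sumr_const.
apply: ler_sum => u _.
have [->|deg_neq0] := eqVneq (degree e u) 0%N; first by rewrite mulr0n.
by rewrite -[X in X <= _]mulr_natr mulVf ?pnatr_eq0.
Qed.

Theorem theorem1 (R : rcfType) (T : finType) (e : rel T) :
  simple_graph e -> bipartite e ->
  let n : R := (#|T|)%:R in
  let a1 : R := 2^-1 * (1 - (Num.sqrt 3)^-1) in
  (mostar e)%:R <= a1 * (1 - a1) * (1 - 2 * a1) * n ^+ 3 /\
  a1 * (1 - a1) * (1 - 2 * a1) * n ^+ 3 = Num.sqrt 3 / 18 * n ^+ 3.
Proof.
move=> [e_sym e_irr] [c c_proper] n a1.
have a1E := alpha1_cubicE n; rewrite -/a1 in a1E.
rewrite a1E; split=> //; exact: mostar_le_sqrt3 e_sym e_irr c_proper.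
Qed.
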